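(* For every $n\ge0$, the priority lattice $\Pi(n)$ is a graded lattice.
   Context: For $n\ge0$ let $[n]_0=\{0,1,\dots,n\}$. A priority forest on $[n]_0$ is a rooted forest with vertex set $[n]_0$ whose component trees $T_0,T_1,\dots$ are increasing (each non-root vertex has a larger label than its parent) and satisfy: for $j<k$ every label of $T_j$ is smaller than every label of $T_k$. The priority lattice $\Pi(n)$ is the set of all priority forests on $[n]_0$ together with an extra element $\hat1$, partially ordered by $P\le P'$ iff $E(P)\subseteq E(P')$ for priority forests $P,P'$, and with $\hat1$ greater than every other element. Its bottom element $\hat0$ is the forest with no edges. *)

From mathcomp Require Import all_boot all_order.
Set Implicit Arguments. Unset Strict Implicit. Unset Printing Implicit Defensive.

(* Vertices of [n]_0 = {0,...,n} are the elements of 'I_n.+1.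
   A forest is given by its (directed) edge set: (p, c) means p is the
   parent of c. *)
Definition vtx (n : nat) := 'I_n.+1.
Definition edgeset (n : nat) := {set (vtx n * vtx n)}.

Definition adj n (E : edgeset n) : rel (vtx n) :=
  fun x y => ((x, y) \in E) || ((y, x) \in E).

(* Such an edge set is automatically acyclic. *)
Definition increasing_rooted_forest n (E : edgeset n) : bool :=
  [forall e in E, (e.1 < e.2)%N] &&
  [forall c : vtx n, #|[set p : vtx n | (p, c) \in E]| <= 1].

(* The component trees T_0, T_1, ... can be ordered so that all labels of T_j
   are smaller than all labels of T_k for j < k; equivalently, each component
   (connected component for the undirected adjacency) is an interval of labels. *)
Definition components_ordered n (E : edgeset n) : bool :=
  [forall i : vtx n, forall j : vtx n, forall k : vtx n,
     ((i < j)%N && (j < k)%N && connect (adj E) i k) ==> connect (adj E) i j].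

Definition priority_forest n (E : edgeset n) : bool :=
  increasing_rooted_forest E && components_ordered E.

(* Elements of Pi(n): Some P for a priority forest P, None for the top 1^. *)
Definition PF (n : nat) := {E : edgeset n | priority_forest E}.
Definition Pi (n : nat) := option (PF n).

Definition Pi_le n (x y : Pi n) : bool :=
  match x, y with
  | _, None => true
  | None, Some _ => false
  | Some P, Some Q => val P \subset val Q
  end.

Section PosetNotions.
Variables (T : finType) (le : rel T).

Definition is_upper_bound (x y z : T) := le x z && le y z.
Definition is_lower_bound (x y z : T) := le z x && le z y.

Definition is_lattice : Prop :=
  forall x y : T,
    (exists z, is_upper_bound x y z /\ forall w, is_upper_bound x y w -> le z w) /\
    (exists z, is_lower_bound x y z /\ forall w, is_lower_bound x y w -> le w z).

Definition is_chain (C : {set T}) : bool :=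
  [forall x in C, forall y in C, le x y || le y x].

Definition is_maximal_chain (C : {set T}) : bool :=
  is_chain C && [forall D : {set T}, (C \proper D) ==> ~~ is_chain D].

Definition is_graded : Prop :=
  forall C D : {set T}, is_maximal_chain C -> is_maximal_chain D -> #|C| = #|D|.
End PosetNotions.

Definition is_poset (T : Type) (le : rel T) : Prop :=
  (forall x, le x x) /\ (forall x y, le x y -> le y x -> x = y) /\
  (forall x y z, le x y -> le y z -> le x z).

(* An increasing forest is a priority forest iff every vertex w that has a
   parent lies in the component of w - 1: components are then intervals of
   labels, each rooted at its minimum.  Consequently, if P is a proper
   subforest of a priority forest Q, the Q-edge into the smallest vertex that
   has a parent in Q but not in P can be added to P, and a priority forest with
   fewer than n edges can be extended by joining some nonzero root c to c - 1.
   So the number of edges (n + 1 for the top) is a rank function with no gaps,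
   and every maximal chain has n + 2 elements.  Meets exist because the union
   of two priority forests contained in a common forest is a priority forest;
   joins are meets of upper bounds. *)

From mathcomp Require Import all_boot all_order zify.
Set Implicit Arguments. Unset Strict Implicit. Unset Printing Implicit Defensive.

Section GradedByRank.
Variables (T : finType) (le : rel T) (r : T -> nat) (bot top : T).
Hypothesis le_refl : forall x, le x x.
Hypothesis le_trans : forall x y z, le x y -> le y z -> le x z.
Hypothesis le_bot : forall x, le bot x.
Hypothesis le_top : forall x, le x top.
Hypothesis rank_bot : r bot = 0.
Hypothesis rank_lt : forall x y, le x y -> x != y -> r x < r y.
Hypothesis rank_gap : forall x y, le x y -> (r x).+1 < r y ->
  exists w, [/\ le x w, le w y, w != x & w != y].

Lemma rank_le x y : le x y -> r x <= r y.
Proof. by have [-> //|ne] := eqVneq x y => /rank_lt/(_ ne)/ltnW. Qed.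

Variable C : {set T}.
Hypothesis C_max : is_maximal_chain le C.

Lemma maxchain_comparable x y : x \in C -> y \in C -> le x y || le y x.
Proof.
case/andP: C_max => /forallP/(_ x) + _ xC yC.
by rewrite xC => /forallP/(_ y); rewrite yC.
Qed.

Lemma maxchain_mem w : (forall z, z \in C -> le z w || le w z) -> w \in C.
Proof.
move=> w_comp; apply: contraT => wNC; case/andP: C_max => _ /forallP/(_ (w |: C)).
rewrite properUr ?sub1set // => /negP[]; apply/forallP => x; apply/implyP.
case/setU1P=> [-> | xC]; apply/forallP => y; apply/implyP; case/setU1P=> [-> | yC].
- by rewrite le_refl.
- by rewrite orbC w_comp.
- by rewrite w_comp.
- exact: maxchain_comparable.
Qed.

Lemma maxchain_bot : bot \in C.
Proof. by apply: maxchain_mem => z _; rewrite le_bot orbT. Qed.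

Lemma maxchain_top : top \in C.
Proof. by apply: maxchain_mem => z _; rewrite le_top. Qed.

Lemma maxchain_le_of_rank x y : x \in C -> y \in C -> r x <= r y -> le x y.
Proof.
move=> xC yC rxy; case/orP: (maxchain_comparable xC yC) => // le_yx.
have [-> // | ne] := eqVneq y x.
by have := rank_lt le_yx ne; rewrite ltnNge rxy.
Qed.

Lemma maxchain_rank_inj : {in C &, injective r}.
Proof.
move=> x y xC yC rxy; apply/eqP; apply: contraT => ne.
by have := rank_lt (maxchain_le_of_rank xC yC (eq_leq rxy)) ne; rewrite rxy ltnn.
Qed.

Lemma maxchain_rank_surj k : k <= r top -> exists2 z, z \in C & r z = k.
Proof.
move=> k_le; have [/exists_inP[z zC /eqP] | /exists_inPn rankNk] :=
  boolP [exists z in C, r z == k]; first by exists z.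
exfalso; have botC := maxchain_bot; have topC := maxchain_top.
have bot_k : (bot \in C) && (r bot < k).
  by rewrite botC rank_bot lt0n -rank_bot eq_sym rankNk.
have top_k : (top \in C) && (k < r top).
  by rewrite topC ltn_neqAle k_le eq_sym rankNk.
have [x /andP[xC xk] xmax] := @arg_maxnP _ bot (fun z => (z \in C) && (r z < k)) r bot_k.
have [y /andP[yC ky] ymin] := @arg_minnP _ top (fun z => (z \in C) && (k < r z)) r top_k.
have [w [xw wy wNx wNy]] :=
  rank_gap (maxchain_le_of_rank xC yC (ltnW (ltn_trans xk ky))) (leq_ltn_trans xk ky).
have wC : w \in C.
  apply: maxchain_mem => z zC; have := rankNk z zC.
  case: ltngtP => // [zk | kz] _.
  - by rewrite (le_trans (maxchain_le_of_rank zC xC (xmax z _)) xw) // zC.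
  - by rewrite (le_trans wy (maxchain_le_of_rank yC zC (ymin z _))) ?orbT // zC.
rewrite eq_sym in wNx.
have := rankNk w wC; case: (ltngtP (r w) k) => // [wk | kw] _.
- by have := xmax w; rewrite wC wk /= leqNgt (rank_lt xw wNx) => /(_ isT).
- by have := ymin w; rewrite wC kw /= leqNgt (rank_lt wy wNy) => /(_ isT).
Qed.

Lemma maxchain_card : #|C| = (r top).+1.
Proof.
rewrite cardE -(size_map r) -(size_iota 0 (r top).+1); apply/perm_size/uniq_perm.
- rewrite map_inj_in_uniq ?enum_uniq // => x y; rewrite !mem_enum.
  exact: maxchain_rank_inj.
- exact: iota_uniq.
move=> k; rewrite mem_iota add0n ltnS.
apply/mapP/idP => [[z zC ->] | /maxchain_rank_surj[z zC <-]].
  exact/rank_le/le_top.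
by exists z; rewrite ?mem_enum.
Qed.

End GradedByRank.

Section LatticeOfInf.
Variables (T : finType) (le : rel T) (inf : {set T} -> T).
Hypothesis inf_lb : forall (X : {set T}) x, x \in X -> le (inf X) x.
Hypothesis inf_glb : forall (X : {set T}) w, (forall x, x \in X -> le w x) -> le w (inf X).

Lemma lattice_of_inf : is_lattice le.
Proof.
move=> x y; split.
- exists (inf [set w | le x w && le y w]); split.
  + by apply/andP; split; apply: inf_glb => w; rewrite inE => /andP[].
  + by move=> w xyw; apply: inf_lb; rewrite inE.
- exists (inf [set x; y]); split.
  + by apply/andP; split; apply: inf_lb; rewrite !inE eqxx ?orbT.
  + by move=> w /andP[wx wy]; apply: inf_glb => z; rewrite !inE => /orP[] /eqP->.
Qed.

End LatticeOfInf.

Section PriorityForests.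
Variable n : nat.
Implicit Types (E F P Q : edgeset n) (c i j k p q u v w : vtx n).

Definition has_parent E c := [exists p, (p, c) \in E].

Definition vpred w : vtx n := inord w.-1.

Lemma val_vpred w : vpred w = w.-1 :> nat.
Proof. by rewrite /vpred inordK // (leq_ltn_trans (leq_pred w)). Qed.

Definition linked_to_pred E :=
  forall w, has_parent E w -> connect (adj E) (vpred w) w.

Lemma forestP E :
  reflect ((forall e, e \in E -> e.1 < e.2) /\
           (forall p q c, (p, c) \in E -> (q, c) \in E -> p = q))
          (increasing_rooted_forest E).
Proof.
apply: (iffP andP) => [[/forall_inP edge_lt /forallP parents_le1] | [edge_lt parent_uniq]].
  split=> // p q c pc qc.
  by move/card_le1_eqP: (parents_le1 c) => /(_ q p); rewrite !inE; apply.
split; first exact/forall_inP.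
apply/forallP => c; apply/card_le1_eqP => p q; rewrite !inE => pc qc.
exact: parent_uniq qc pc.
Qed.

Lemma forest_edge_lt E e : increasing_rooted_forest E -> e \in E -> e.1 < e.2.
Proof. by case/forestP => + _; apply. Qed.

Lemma forest_parent_uniq E p q c :
  increasing_rooted_forest E -> (p, c) \in E -> (q, c) \in E -> p = q.
Proof. by case/forestP => _; apply. Qed.

Lemma forest_subset E F :
  E \subset F -> increasing_rooted_forest F -> increasing_rooted_forest E.
Proof.
move=> /subsetP EF /forestP[edge_lt parent_uniq]; apply/forestP.
by split=> [e /EF | p q c /EF pc /EF]; [exact: edge_lt | exact: parent_uniq].
Qed.

Lemma forest_add_edge E p c : increasing_rooted_forest E -> ~~ has_parent E c ->
  p < c -> increasing_rooted_forest ((p, c) |: E).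
Proof.
move=> /forestP[edge_lt parent_uniq] c_root pc; apply/forestP; split.
  by move=> e /setU1P[-> // | /edge_lt].
have no_parent q : (q, c) \notin E by apply: contra c_root => qc; apply/existsP; exists q.
move=> q1 q2 d /setU1P[[-> ->] | q1d] /setU1P[].
- by case.
- by rewrite (negbTE (no_parent q2)).
- by case=> _ dc; rewrite dc (negbTE (no_parent q1)) in q1d.
- exact: parent_uniq q1d.
Qed.

Lemma card_add_edge E p c : ~~ has_parent E c -> #|(p, c) |: E| = #|E|.+1.
Proof.
move=> c_root; rewrite cardsU1.
suff -> : (p, c) \notin E by [].
by apply: contra c_root => pc; apply/existsP; exists p.
Qed.

Lemma adj_connect_sym E : connect_sym (adj E).
Proof. by apply: sym_connect_sym => x y; rewrite /adj orbC. Qed.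

Lemma edge_connect E p c : (p, c) \in E -> connect (adj E) p c.
Proof. by move=> pc; apply: connect1; rewrite /adj pc. Qed.

Lemma connect_adj_subset E F x y :
  E \subset F -> connect (adj E) x y -> connect (adj F) x y.
Proof.
move=> /subsetP EF; apply: connect_sub => a b /orP[ab | ba]; apply: connect1.
  by rewrite /adj (EF _ ab).
by rewrite /adj (EF _ ba) orbT.
Qed.

Lemma connect_edges_le E x y : increasing_rooted_forest E ->
  connect [rel a b | (a, b) \in E] x y -> x <= y.
Proof.
move=> forestE /connectP[s + ->]; elim: s x => [x _ // | z s IH x /andP[xz zs]].
exact: leq_trans (ltnW (forest_edge_lt forestE xz)) (IH z zs).
Qed.

(* The tree of a root [w] is the set of vertices reachable from [w] along edges:
   stepping from such a vertex to its parent stays inside, by uniqueness of parents. *)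
Lemma root_connect_ge E w u : increasing_rooted_forest E -> ~~ has_parent E w ->
  connect (adj E) w u -> w <= u.
Proof.
move=> forestE w_root wu; apply: (connect_edges_le forestE).
pose down := [pred v | connect [rel a b | (a, b) \in E] w v].
suff down_closed : closed (adj E) down.
  by have := closed_connect down_closed wu; rewrite !inE connect0 => <-.
apply: (intro_closed (adj_connect_sym E)) => x y /orP[xy | yx] down_x.
  exact: connect_trans down_x (connect1 _).
case/connectP: down_x => s; case/lastP: s => [_ /= xw | s z].
  by case/negP: w_root; apply/existsP; exists y; rewrite -xw.
rewrite rcons_path last_rcons => /andP[ws zx] xz; rewrite -{}xz in zx.
by rewrite (forest_parent_uniq forestE yx zx); apply/connectP; exists s.
Qed.

Lemma connect_interval E u v : linked_to_pred E -> u <= v ->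
  (forall w, u < w <= v -> has_parent E w) -> connect (adj E) u v.
Proof.
move=> linked; have [m] := ubnP (v - u); elim: m v => // m IH v v_lt uv parents.
have [vu | uv'] := leqP v u.
  by rewrite (_ : v = u) ?connect0 //; apply/val_inj/eqP; rewrite eqn_leq vu uv.
apply: connect_trans (linked v (parents v _)); last by rewrite uv' leqnn.
apply: IH; rewrite val_vpred; [lia | lia | move=> w uw; apply: parents; lia].
Qed.

(* The largest root in (i, k] would be connected to k, hence to i < it. *)
Lemma connect_parents E i k w : increasing_rooted_forest E -> linked_to_pred E ->
  connect (adj E) i k -> i < w <= k -> has_parent E w.
Proof.
move=> forestE linked ik iwk; apply: contraT => w_root.
have w_root_in : (i < w <= k) && ~~ has_parent E w by rewrite iwk.
have [r /andP[irk r_root] rmax] :=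
  @arg_maxnP _ w (fun x => (i < x <= k) && ~~ has_parent E x) val w_root_in.
have rk : connect (adj E) r k.
  apply: connect_interval linked _ _; first by case/andP: irk.
  move=> x /andP[rx xk]; apply: contraT => x_root.
  have ix : i < x by case/andP: irk => ir _; exact: ltn_trans ir rx.
  by move: (rmax x); rewrite ix xk x_root /= leqNgt rx => /(_ isT).
have ri : connect (adj E) r i by rewrite (connect_trans rk) // adj_connect_sym.
case/andP: irk => ir _; by have := root_connect_ge forestE r_root ri; rewrite leqNgt ir.
Qed.

Lemma components_orderedP E :
  reflect (forall i j k, i < j < k -> connect (adj E) i k -> connect (adj E) i j)
          (components_ordered E).
Proof.
apply: (iffP forallP) => [ordered i j k /andP[ij jk] ik | ordered i].
  by move/forallP: (ordered i) => /(_ j)/forallP/(_ k)/implyP; apply; rewrite ij jk.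
apply/forallP => j; apply/forallP => k; apply/implyP => /andP[/andP[ij jk] ik].
by apply: ordered ik; rewrite ij.
Qed.

Lemma priority_forest_linked E : priority_forest E -> linked_to_pred E.
Proof.
case/andP=> forestE /components_orderedP ordered w /existsP[p pw].
have /= pw_lt := forest_edge_lt forestE pw.
have [p_lt | p_ge] := ltnP p (vpred w).
  apply: connect_trans _ (edge_connect pw); rewrite adj_connect_sym.
  by apply: ordered (edge_connect pw); rewrite p_lt val_vpred; lia.
suff -> : vpred w = p by apply: edge_connect.
by apply/val_inj => /=; move: p_ge; rewrite val_vpred; lia.
Qed.

Lemma linked_priority_forest E :
  increasing_rooted_forest E -> linked_to_pred E -> priority_forest E.
Proof.
move=> forestE linked; rewrite /priority_forest forestE.
apply/components_orderedP => i j k /andP[ij jk] ik.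
apply: (connect_interval linked (ltnW ij)) => w /andP[iw wj].
by apply: connect_parents forestE linked ik _; rewrite iw (leq_trans wj (ltnW jk)).
Qed.

Lemma priority_forest0 : priority_forest (set0 : edgeset n).
Proof.
apply: linked_priority_forest => [|w /existsP[p]]; last by rewrite inE.
by apply/forestP; split=> [e | p q c]; rewrite inE.
Qed.

Lemma priority_forest_add_edge E p c : priority_forest E -> ~~ has_parent E c ->
  p < c -> connect (adj E) p (vpred c) -> priority_forest ((p, c) |: E).
Proof.
move=> pfE c_root pc p_pred; have /andP[forestE _] := pfE.
have sub_E : E \subset (p, c) |: E := subsetUr _ _.
apply: linked_priority_forest; first exact: forest_add_edge.
move=> w /existsP[q /setU1P[[_ ->] | qw]].
  rewrite adj_connect_sym; apply: connect_trans (connect_adj_subset sub_E p_pred).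
  by rewrite adj_connect_sym edge_connect ?setU11.
apply: connect_adj_subset sub_E (priority_forest_linked pfE _).
by apply/existsP; exists q.
Qed.

Lemma priority_forest_setU P Q F : priority_forest P -> priority_forest Q ->
  P \subset F -> Q \subset F -> increasing_rooted_forest F -> priority_forest (P :|: Q).
Proof.
move=> pfP pfQ subP subQ forestF; apply: linked_priority_forest.
  by apply: forest_subset forestF; rewrite subUset subP subQ.
move=> w /existsP[q]; rewrite inE => /orP[qw | qw].
  apply: connect_adj_subset (subsetUl P Q) (priority_forest_linked pfP _).
  by apply/existsP; exists q.
apply: connect_adj_subset (subsetUr P Q) (priority_forest_linked pfQ _).
by apply/existsP; exists q.
Qed.

Lemma card_forest_edges E :
  increasing_rooted_forest E -> #|E| = #|[set c | has_parent E c]|.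
Proof.
move=> forestE; rewrite -(card_in_imset (f := snd)).
  apply: eq_card => c; rewrite inE.
  by apply/imsetP/existsP => [[[p d] pd ->] | [p pc]]; [exists p | exists (p, c)].
move=> [p c] [q d] pc qd /= cd; move: pc; rewrite cd => pd.
by rewrite (forest_parent_uniq forestE pd qd).
Qed.

Lemma has_parent_neq0 E c : increasing_rooted_forest E -> has_parent E c -> c != ord0.
Proof.
by move=> forestE /existsP[p /(forest_edge_lt forestE) /= pc]; apply: contraTneq pc => ->.
Qed.

Lemma card_forest_le E : increasing_rooted_forest E -> #|E| <= n.
Proof.
move=> forestE; rewrite card_forest_edges //.
apply: (@leq_trans #|[set~ (ord0 : vtx n)]|); last by rewrite cardsC1 card_ord.
by apply/subset_leq_card/subsetP => c; rewrite !inE; apply: has_parent_neq0.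
Qed.

Lemma forest_root_exists E : increasing_rooted_forest E -> #|E| < n ->
  exists2 c, c != ord0 & ~~ has_parent E c.
Proof.
move=> forestE E_lt.
have /existsP[c /andP[c0 c_root]] : [exists c, (c != ord0) && ~~ has_parent E c].
  apply: contraTT E_lt => /existsPn all_parent; rewrite -leqNgt card_forest_edges //.
  apply: (@leq_trans #|[set~ (ord0 : vtx n)]|); first by rewrite cardsC1 card_ord.
  apply/subset_leq_card/subsetP => c; rewrite !inE => c0.
  by move: (all_parent c); rewrite c0 negbK.
by exists c.
Qed.

Lemma proper_new_child P Q : increasing_rooted_forest Q -> P \proper Q ->
  exists c, ~~ has_parent P c && has_parent Q c.
Proof.
move=> forestQ /properP[PQ [[p c] pcQ pcNP]]; exists c.
apply/andP; split; last by apply/existsP; exists p.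
apply/existsP => -[q qcP].
by case/negP: pcNP; rewrite (forest_parent_uniq forestQ pcQ (subsetP PQ _ qcP)).
Qed.

(* Add the edge of [Q] into the smallest vertex that has a parent in [Q] but not
   in [P]: below it, [P] and [Q] have the same roots, so the new edge joins two
   vertices that are already in one component of [P]. *)
Lemma priority_forest_step P Q : priority_forest P -> priority_forest Q -> P \proper Q ->
  exists p c, [/\ (p, c) \in Q, ~~ has_parent P c & priority_forest ((p, c) |: P)].
Proof.
move=> pfP pfQ PQ; have /andP[forestQ _] := pfQ.
have [c0 new_c0] := proper_new_child forestQ PQ.
have [c /andP[c_root /existsP[p pcQ]] c_min] :=
  @arg_minnP _ c0 (fun c => ~~ has_parent P c && has_parent Q c) val new_c0.
have /= pc := forest_edge_lt forestQ pcQ.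
exists p, c; split=> //; apply: priority_forest_add_edge => //.
apply: (connect_interval (priority_forest_linked pfP)); rewrite val_vpred; first lia.
move=> w pwc; apply: contraT => w_rootP.
have w_rootQ : ~~ has_parent Q w.
  by apply/negP => wQ; have := c_min w; rewrite w_rootP wQ => /(_ isT) /=; lia.
case/negP: w_rootQ.
apply: (connect_parents forestQ (priority_forest_linked pfQ) (edge_connect pcQ)); lia.
Qed.

End PriorityForests.

Section PriorityLattice.
Variable n : nat.
Implicit Types (x y : Pi n) (X : {set Pi n}).

Definition Pi_rank x : nat := if x is Some P then #|val P| else n.+1.

Definition Pi_bot : Pi n := Some (exist _ set0 (priority_forest0 n)).

Lemma forest_of_PF (P : PF n) : increasing_rooted_forest (val P).
Proof. by case/andP: (valP P). Qed.

Lemma Pi_le_refl x : Pi_le x x.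
Proof. by case: x => //= P; apply: subxx. Qed.

Lemma Pi_le_anti x y : Pi_le x y -> Pi_le y x -> x = y.
Proof.
case: x y => [P|] [Q|] //= PQ QP; congr Some; apply/val_inj/eqP.
by rewrite eqEsubset PQ QP.
Qed.

Lemma Pi_le_trans x y z : Pi_le x y -> Pi_le y z -> Pi_le x z.
Proof. by case: x y z => [P|] [Q|] [R|] //=; apply: subset_trans. Qed.

Lemma Pi_le_bot x : Pi_le Pi_bot x.
Proof. by case: x => //= P; apply: sub0set. Qed.

Lemma Pi_le_top x : Pi_le x None.
Proof. by case: x. Qed.

Lemma Pi_rank_bot : Pi_rank Pi_bot = 0.
Proof. exact: cards0. Qed.

Lemma Pi_rank_lt x y : Pi_le x y -> x != y -> Pi_rank x < Pi_rank y.
Proof.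
case: x y => [P|] [Q|] //= PQ; last by rewrite ltnS card_forest_le ?forest_of_PF.
move=> PNQ; apply: proper_card; rewrite properEneq PQ andbT.
by apply: contraNneq PNQ => /val_inj ->.
Qed.

Lemma Pi_rank_gap x y : Pi_le x y -> (Pi_rank x).+1 < Pi_rank y ->
  exists w, [/\ Pi_le x w, Pi_le w y, w != x & w != y].
Proof.
case: x y => [P|] [Q|] //= PQ; last by rewrite ltnNge leqnSn.
- move=> rank_lt; have PQ_proper : val P \proper val Q by rewrite properEcard PQ ltnW.
  have [p [c [pcQ c_root pf_pc]]] := priority_forest_step (valP P) (valP Q) PQ_proper.
  exists (Some (exist (@priority_forest n) _ pf_pc)).
  rewrite /= subsetUr subUset sub1set pcQ PQ.
  split=> //; apply/eqP => /(congr1 Pi_rank) /=; rewrite card_add_edge //.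
    by move/esym/n_Sn.
  by move=> rank_eq; rewrite rank_eq ltnn in rank_lt.
- move=> rank_lt.
  have [c c0 c_root] := forest_root_exists (forest_of_PF P) (rank_lt : #|val P| < n).
  have pc : vpred c < c by rewrite val_vpred prednK ?lt0n.
  have pf_pc := priority_forest_add_edge (valP P) c_root pc (connect0 _ _).
  exists (Some (exist (@priority_forest n) _ pf_pc)); rewrite /= subsetUr; split=> //.
  by apply/eqP => /(congr1 Pi_rank) /=; rewrite card_add_edge // => /esym/n_Sn.
Qed.

Definition inf_edges X : edgeset n :=
  \bigcup_(A : PF n | [forall P : PF n, (Some P \in X) ==> (val A \subset val P)]) val A.

Definition Pi_inf X : Pi n :=
  if [exists P : PF n, Some P \in X] then insub (inf_edges X) else None.

Lemma priority_forest_inf_edges X (P0 : PF n) :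
  Some P0 \in X -> priority_forest (inf_edges X).
Proof.
move=> P0X.
suff /andP[] : priority_forest (inf_edges X) && (inf_edges X \subset val P0) by [].
apply: (big_ind (fun E => priority_forest E && (E \subset val P0))).
- by rewrite priority_forest0 sub0set.
- move=> E F /andP[pfE EP0] /andP[pfF FP0]; rewrite subUset EP0 FP0 !andbT.
  exact: priority_forest_setU pfE pfF EP0 FP0 (forest_of_PF P0).
- by move=> A /forallP/(_ P0); rewrite P0X (valP A).
Qed.

Lemma Pi_inf_lb X x : x \in X -> Pi_le (Pi_inf X) x.
Proof.
case: x => [P|] PX; last by case: (Pi_inf X).
have X_forest : [exists P, Some P \in X] by apply/existsP; exists P.
rewrite /Pi_inf X_forest (insubT _ (priority_forest_inf_edges PX)) /=.
by apply/bigcupsP => A /forallP/(_ P); rewrite PX.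
Qed.

Lemma Pi_inf_glb X w : (forall x, x \in X -> Pi_le w x) -> Pi_le w (Pi_inf X).
Proof.
rewrite /Pi_inf; case: ifP => [/existsP[P0 P0X] | _] w_lb; last exact: Pi_le_top.
case: w w_lb => [W | /(_ _ P0X) //] W_lb.
rewrite (insubT _ (priority_forest_inf_edges P0X)) /=; apply: (bigcup_sup W).
by apply/forallP => P; apply/implyP => /W_lb.
Qed.

Lemma Pi_poset : is_poset (@Pi_le n).
Proof. by split; [exact: Pi_le_refl | split; [exact: Pi_le_anti | exact: Pi_le_trans]]. Qed.

Lemma Pi_lattice : is_lattice (@Pi_le n).
Proof. exact: lattice_of_inf Pi_inf_lb Pi_inf_glb. Qed.

Lemma Pi_graded : is_graded (@Pi_le n).
Proof.
have card_max := maxchain_card Pi_le_refl Pi_le_trans Pi_le_bot Pi_le_top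
  Pi_rank_bot Pi_rank_lt Pi_rank_gap.
by move=> C D C_max D_max; rewrite (card_max C C_max) (card_max D D_max).
Qed.

End PriorityLattice.

Theorem lemma3p1 (n : nat) :
  is_poset (@Pi_le n) /\ is_lattice (@Pi_le n) /\ is_graded (@Pi_le n).
Proof. by split; [exact: Pi_poset | split; [exact: Pi_lattice | exact: Pi_graded]]. Qed.
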